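(* Let $Q=Q(p,t)$, $p\in[0,S]$, $t\in[0,T]$, satisfy $dQ(p,t)=\mu_Q(p,t)dt+\int_0^1\tilde\sigma_Q(p,s,t)B(ds,dt)$ with $\tilde\sigma_Q=\sigma_Qb_Q$, $\int_0^1b_Q^2(p,s,t)ds=1$, $Q$ strictly decreasing and $C^2$ in $p$, and $\tilde\sigma_Q$ $C^1$ in $p$. Assume the demand curve depends linearly on $p$ in the sense that $$\frac{\frac{\partial\tilde\sigma_Q}{\partial p}(p,s,t)}{\frac{\partial Q}{\partial p}(p,t)}=h_Q(s,t)\quad\text{and}\quad\frac{\partial^2Q}{\partial p^2}(p,t)=0$$ for a bounded function $h_Q$. If there exists a bounded function $\lambda_Q=\lambda_Q(s,t)$ such that, for every $t\in[0,T]$ (and $p\in[0,S]$), $\mu_Q(p,t)=\int_0^1\tilde\sigma_Q(p,s,t)\lambda_Q(s,t)\,ds$, then the market price of risk equation $$\int_0^1\tilde\sigma_Q(p,s,t)\lambda(s,t)\,ds=A(p,t),\qquad p\in[0,S],\ t\in[0,T],$$ has the bounded solution $\lambda(s,t)=\lambda_Q(s,t)-h_Q(s,t)$.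
   Context: $B$ is a Brownian sheet on $[0,1]\times[0,T]$ on a filtered probability space generating the filtration; $\int_0^1 b(s,t)B(ds,dt)$ denotes the (differential of the) stochastic integral against it. $\mu_Q,\sigma_Q,b_Q$ are adapted real-valued processes. Notation: $C(p,t)=-\big(\frac{\partial Q}{\partial p}(p,t)\big)^{-1}\int_0^1\frac{\partial\tilde\sigma_Q}{\partial p}(p,s,t)\tilde\sigma_Q(p,s,t)ds$ and $A(p,t)=\mu_Q(p,t)+\frac12\frac{\partial^2Q}{\partial p^2}(p,t)\Big(\frac{\sigma_Q(p,t)}{\frac{\partial Q}{\partial p}(p,t)}\Big)^2+C(p,t)$. *)

From HB Require Import structures.
From mathcomp Require Import all_boot all_order all_algebra.
From mathcomp Require Import all_classical all_reals all_analysis.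
Set Implicit Arguments. Unset Strict Implicit. Unset Printing Implicit Defensive.
Import Order.TTheory GRing.Theory Num.Theory.
Import numFieldNormedType.Exports.
Local Open Scope classical_set_scope.
Local Open Scope ring_scope.

Section Defs.
Variable R : realType.

Definition int01 (f : R -> R) : R := \int[@lebesgue_measure R]_(s in `[0, 1]) f s.

Definition integrable01 (f : R -> R) : Prop :=
  (@lebesgue_measure R).-integrable `[0, 1] (EFin \o f).

Definition dP (F : R -> R -> R) (p t : R) : R := derive1 (fun q => F q t) p.
Definition dP2 (F : R -> R -> R) (p t : R) : R := derive1 (fun q => dP F q t) p.
Definition dPs (G : R -> R -> R -> R) (p s t : R) : R := derive1 (fun q => G q s t) p.

Definition Cterm (Q : R -> R -> R) (sigt : R -> R -> R -> R) (p t : R) : R :=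
  - (dP Q p t)^-1 * int01 (fun s => dPs sigt p s t * sigt p s t).

Definition Aterm (Q muQ sigQ : R -> R -> R) (sigt : R -> R -> R -> R) (p t : R) : R :=
  muQ p t + 2^-1 * dP2 Q p t * (sigQ p t / dP Q p t) ^+ 2 + Cterm Q sigt p t.

End Defs.

From HB Require Import structures.
From mathcomp Require Import all_boot all_order all_algebra.
From mathcomp Require Import all_classical all_reals all_analysis.
From mathcomp Require Import ring.

Set Implicit Arguments.
Unset Strict Implicit.
Unset Printing Implicit Defensive.
Import Order.TTheory GRing.Theory Num.Theory.
Import numFieldNormedType.Exports.
Local Open Scope classical_set_scope.
Local Open Scope ring_scope.

(* Since Q_pp = 0, the Ito term of A vanishes and A = mu_Q + C.  The linearity
   assumption d(sigma~_Q)/dp = h_Q Q_p gives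
     int sigma~_Q h_Q ds = (Q_p)^-1 int (d sigma~_Q/dp) sigma~_Q ds = - C,
   so int sigma~_Q (lambda_Q - h_Q) ds = mu_Q + C = A.  Both h_Q and C use the
   same inverse (Q_p)^-1. *)

Section Integral01.
Variable R : realType.
Implicit Types (f g : R -> R) (k : R).

Lemma eq_integrable01 f g :
  {in `[0, 1], f =1 g} -> integrable01 f -> integrable01 g.
Proof.
move=> fg; apply: eq_integrable => // s s01 /=.
by rewrite fg// inE; exact: set_mem s01.
Qed.

Lemma integrable01Zl k f : integrable01 f -> integrable01 (fun s => k * f s).
Proof.
move=> f_int.
have : (@lebesgue_measure R).-integrable `[0, 1] (fun s => k%:E * (f s)%:E)%E.
  exact: integrableZl.
by apply: eq_integrable => //= s _; rewrite EFinM.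
Qed.

Lemma eq_int01 f g : {in `[0, 1], f =1 g} -> int01 f = int01 g.
Proof.
move=> fg; apply: eq_Rintegral => s s01.
by rewrite fg// inE; exact: set_mem s01.
Qed.

Lemma int01B f g : integrable01 f -> integrable01 g ->
  int01 (fun s => f s - g s) = int01 f - int01 g.
Proof. exact: RintegralB. Qed.

Lemma int01Zl k f : integrable01 f -> int01 (fun s => k * f s) = k * int01 f.
Proof. exact: RintegralZl. Qed.

End Integral01.

Section LinearDemand.
Variables (R : realType) (Q : R -> R -> R) (sigt : R -> R -> R -> R).
Variables (h : R -> R) (p t : R).

Hypothesis slope_h :
  forall s, s \in `[0, 1] -> dPs sigt p s t / dP Q p t = h s.

Lemma sigt_mul_slope_eq :
  {in `[0, 1], (fun s => sigt p s t * h s) =1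
               (fun s => (dP Q p t)^-1 * (dPs sigt p s t * sigt p s t))}.
Proof. by move=> s s01 /=; rewrite -slope_h//; ring. Qed.

Hypothesis int_C : integrable01 (fun s => dPs sigt p s t * sigt p s t).

Lemma integrable01_sigt_mul_slope : integrable01 (fun s => sigt p s t * h s).
Proof.
have := integrable01Zl (dP Q p t)^-1 int_C; apply: eq_integrable01.
by move=> s s01; rewrite sigt_mul_slope_eq.
Qed.

Lemma int01_sigt_mul_slope : int01 (fun s => sigt p s t * h s) = - Cterm Q sigt p t.
Proof.
rewrite (eq_int01 sigt_mul_slope_eq) int01Zl//.
by rewrite /Cterm mulNr opprK.
Qed.

End LinearDemand.

Lemma Aterm_linear (R : realType) (Q muQ sigQ : R -> R -> R)
    (sigt : R -> R -> R -> R) (p t : R) :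
  dP2 Q p t = 0 -> Aterm Q muQ sigQ sigt p t = muQ p t + Cterm Q sigt p t.
Proof. by move=> Qpp0; rewrite /Aterm Qpp0 mulr0 mul0r addr0. Qed.

Theorem proposition5p6 (R : realType) (S T : R)
  (Q muQ sigQ : R -> R -> R) (bQ sigt : R -> R -> R -> R) (hQ lamQ : R -> R -> R) :
  (* sigma~_Q = sigma_Q b_Q *)
  (forall p s t, p \in `[0, S] -> s \in `[0, 1] -> t \in `[0, T] ->
     sigt p s t = sigQ p t * bQ p s t) ->
  (* int_0^1 b_Q^2 ds = 1 *)
  (forall p t, p \in `[0, S] -> t \in `[0, T] ->
     integrable01 (fun s => bQ p s t ^+ 2) /\ int01 (fun s => bQ p s t ^+ 2) = 1) ->
  (* Q strictly decreasing in p *)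
  (forall t, t \in `[0, T] -> forall p q, p \in `[0, S] -> q \in `[0, S] ->
     p < q -> Q q t < Q p t) ->
  (* Q is C^2 in p *)
  (forall t, t \in `[0, T] ->
     (forall p, p \in `[0, S] ->
        derivable (fun q => Q q t) p 1 /\ derivable (fun q => dP Q q t) p 1) /\
     {within `[0, S], continuous (fun q => dP2 Q q t)}) ->
  (* sigma~_Q is C^1 in p *)
  (forall s t, s \in `[0, 1] -> t \in `[0, T] ->
     (forall p, p \in `[0, S] -> derivable (fun q => sigt q s t) p 1) /\
     {within `[0, S], continuous (fun q => dPs sigt q s t)}) ->
  (* linear dependence of the demand curve on p *)
  (forall p s t, p \in `[0, S] -> s \in `[0, 1] -> t \in `[0, T] ->
     dPs sigt p s t / dP Q p t = hQ s t) ->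
  (forall p t, p \in `[0, S] -> t \in `[0, T] -> dP2 Q p t = 0) ->
  (* h_Q bounded *)
  (exists M : R, forall s t, s \in `[0, 1] -> t \in `[0, T] -> `|hQ s t| <= M) ->
  (* well-definedness of C(p,t) *)
  (forall p t, p \in `[0, S] -> t \in `[0, T] ->
     integrable01 (fun s => dPs sigt p s t * sigt p s t)) ->
  (* lambda_Q bounded, integrals well defined, and mu_Q = int sigma~_Q lambda_Q *)
  (exists M : R, forall s t, s \in `[0, 1] -> t \in `[0, T] -> `|lamQ s t| <= M) ->
  (forall p t, p \in `[0, S] -> t \in `[0, T] ->
     integrable01 (fun s => sigt p s t * lamQ s t)) ->
  (forall p t, p \in `[0, S] -> t \in `[0, T] ->
     muQ p t = int01 (fun s => sigt p s t * lamQ s t)) ->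
  (* conclusion: lambda := lambda_Q - h_Q is a bounded solution *)
  (exists M : R, forall s t, s \in `[0, 1] -> t \in `[0, T] ->
     `|lamQ s t - hQ s t| <= M) /\
  (forall p t, p \in `[0, S] -> t \in `[0, T] ->
     int01 (fun s => sigt p s t * (lamQ s t - hQ s t)) = Aterm Q muQ sigQ sigt p t).
Proof.
move=> _ _ _ _ _ slope Qpp0 [Mh hQ_bd] int_C [Ml lamQ_bd] int_mu mu_eq.
split.
  exists (Ml + Mh) => s t s01 tT.
  by rewrite (le_trans (ler_normB _ _))// lerD ?lamQ_bd ?hQ_bd.
move=> p t pS tT.
have slope_pt s : s \in `[0, 1] -> dPs sigt p s t / dP Q p t = hQ s t.
  by move=> s01; exact: slope.
under eq_int01 => s _ do rewrite mulrBr.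
have int_Cpt := int_C p t pS tT.
have int_slope := integrable01_sigt_mul_slope (h := fun s => hQ s t) slope_pt int_Cpt.
have int01_slope := int01_sigt_mul_slope (h := fun s => hQ s t) slope_pt int_Cpt.
rewrite int01B; [|exact: int_mu|exact: int_slope].
by rewrite int01_slope opprK Aterm_linear ?Qpp0// mu_eq.
Qed.
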